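(* There is an absolute constant $C > 0$ such that for every $L \geq 2$, $m \geq 1$, $k^* \in [m]$, $i \in \{0, \ldots, L\}$, $k \in [m]$ and $\lambda \in [m]^{L+1}$, every state $\tau$ on the path $\gamma_{\lambda, \lambda_{[i,k]}}$ differs from $\lambda$ in at most $C\log L$ coordinates and differs from $\lambda_{[i,k]}$ in at most $C\log L$ coordinates.
   Context: States are $\lambda = (\lambda_0,\ldots,\lambda_L) \in [m]^{L+1}$; coordinate $\ell$ is level $\ell$. $\lambda_{[i,k]}$ is $\lambda$ with the level-$i$ entry replaced by $k$. The procedure $\mathbf{Swap}(a,b)$ ($0\le a\le b\le L$): if $b - a \leq 1$, perform the single elementary operation exchanging the entries at levels $a$ and $b$; otherwise with $h = \lfloor (a+b)/2 \rfloor$ perform $\mathbf{Swap}(a,h)$, then $\mathbf{Swap}(h,b)$, then $\mathbf{Swap}(a,h)$. The path $\gamma_{\lambda,\lambda_{[i,k]}}$ (with $k^*$ a fixed element of $[m]$; in the paper a maximizer of $\pi_L(A_k)$) starts at $\lambda$ and performs in order: (1) set the level-0 entry to $k^*$; (2) $\mathbf{Swap}(0,i)$; (3) set the level-0 entry to $k$; (4) $\mathbf{Swap}(0,i)$; (5) set the level-0 entry to $\lambda_0$. The path is the sequence of states consisting of $\lambda$ and the state after each elementary operation. Two states differ in coordinate $\ell$ if their level-$\ell$ entries are unequal. *)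

From Stdlib Require Import Reals.
From mathcomp Require Import all_boot.
Set Implicit Arguments. Unset Strict Implicit. Unset Printing Implicit Defensive.

Section Paths.
Variables (L m : nat).

Definition state := 'I_L.+1 -> 'I_m.

Inductive elop :=
  | SetZero of 'I_m
  | Exch of nat & nat.

Definition apply_op (tau : state) (o : elop) : state :=
  match o with
  | SetZero v => fun l => if nat_of_ord l == 0 then v else tau l
  | Exch a b => fun l =>
      if nat_of_ord l == a then tau (inord b)
      else if nat_of_ord l == b then tau (inord a)
      else tau l
  end.

(* Swap(a,b) as its list of elementary operations; [fuel] bounds the recursion
   depth, and fuel = b - a is always sufficient (see swap_ops below). *)
Fixpoint swap_ops_fuel (fuel a b : nat) : seq elop :=
  if b - a <= 1 then [:: Exch a b] else
  match fuel with
  | 0 => [::]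
  | fuel'.+1 =>
      let h := (a + b) %/ 2 in
      swap_ops_fuel fuel' a h ++ swap_ops_fuel fuel' h b ++ swap_ops_fuel fuel' a h
  end.

Definition swap_ops (a b : nat) : seq elop := swap_ops_fuel (b - a) a b.

Definition replace_at (lam : state) (i : 'I_L.+1) (k : 'I_m) : state :=
  fun l => if l == i then k else lam l.

Definition gamma_ops (kstar : 'I_m) (lam : state) (i : 'I_L.+1) (k : 'I_m) : seq elop :=
  [:: SetZero kstar] ++ swap_ops 0 i ++ [:: SetZero k] ++ swap_ops 0 i
  ++ [:: SetZero (lam ord0)].

Definition gamma_path (kstar : 'I_m) (lam : state) (i : 'I_L.+1) (k : 'I_m)
  : seq state :=
  lam :: scanl apply_op lam (gamma_ops kstar lam i k).

Definition ndiff (s t : state) : nat := #|[pred l : 'I_L.+1 | s l != t l]|.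

End Paths.

(* Swap(a,b) has the net effect of a single exchange, so it moves at most two
   coordinates.  At any moment inside Swap(a,b) the current state is reached
   from the initial one by at most two completed sub-swaps (at most four moved
   coordinates) followed by a prefix of one more sub-swap on an interval of half
   the length; hence a prefix of Swap(a,b) with b - a <= 2^e moves at most
   2 + 4e coordinates.  The path gamma is three single-coordinate updates and
   two Swap(0,i), so every state on it is within O(log L) of lambda, and
   lambda_[i,k] is within one coordinate of lambda. *)
From Stdlib Require Import Reals Lra FunctionalExtensionality.
From mathcomp Require Import all_boot zify.

Set Implicit Arguments. Unset Strict Implicit. Unset Printing Implicit Defensive.

Lemma in_scanl_take (T S : Type) (f : T -> S -> T) (x y : T) (s : seq S) :
  List.In y (x :: scanl f x s) -> exists n, y = foldl f x (take n s).
Proof.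
elim: s x => [|o s IHs] x /=; first by case=> [<-|[]]; exists 0.
case=> [<-|/IHs [n ->]]; first by exists 0.
by exists n.+1.
Qed.

Section Displacement.
Variables (L m : nat).
Local Notation state := (state L m).
Local Notation run := (foldl (@apply_op L m)).

Lemma ndiffxx (x : state) : ndiff x x = 0.
Proof. by apply: eq_card0 => l; rewrite !inE eqxx. Qed.

Lemma ndiff_triangle (x y z : state) : ndiff x z <= ndiff x y + ndiff y z.
Proof.
rewrite /ndiff -cardUI; apply: leq_trans (leq_addr _ _).
apply/subset_leq_card/subsetP => l; rewrite !inE.
by case: (eqVneq (x l) (y l)) => [->|] //; rewrite orbC => ->.
Qed.

Lemma ndiff_replace_at (lam : state) i k : ndiff lam (replace_at lam i k) <= 1.
Proof.
rewrite /ndiff -(card1 i); apply/subset_leq_card/subsetP => l.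
by rewrite !inE /replace_at; case: (eqVneq l i) => [->|]; rewrite ?eqxx.
Qed.

Lemma ndiff_SetZero (tau : state) v : ndiff (apply_op tau (SetZero v)) tau <= 1.
Proof.
rewrite /ndiff -(card1 (@ord0 L)); apply/subset_leq_card/subsetP => l.
rewrite !inE /=; case: (eqVneq (l : nat) 0) => [l0 _|_]; last by rewrite eqxx.
exact/eqP/val_inj.
Qed.

Lemma ndiff_Exch (tau : state) a b : ndiff (apply_op tau (Exch m a b)) tau <= 2.
Proof.
apply: (@leq_trans #|[set (@inord L a); inord b]|); last first.
  by rewrite cards2; case: (_ != _).
apply/subset_leq_card/subsetP => l; rewrite !inE /=.
case: (eqVneq (l : nat) a) => [<- _|_]; first by rewrite inord_val eqxx.
case: (eqVneq (l : nat) b) => [<- _|_]; first by rewrite inord_val eqxx orbT.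
by rewrite eqxx.
Qed.

Definition prefix_bounded (os : seq (elop m)) (B : nat) :=
  forall (tau : state) n, ndiff (run tau (take n os)) tau <= B.

Definition net_bounded (os : seq (elop m)) (B : nat) :=
  forall tau : state, ndiff (run tau os) tau <= B.

Lemma prefix_net_bounded os B : prefix_bounded os B -> net_bounded os B.
Proof. by move=> Pos tau; have := Pos tau (size os); rewrite take_size. Qed.

Lemma prefix_bounded_le os B B' : B <= B' ->
  prefix_bounded os B -> prefix_bounded os B'.
Proof. by move=> leBB' Pos tau n; apply: leq_trans leBB'. Qed.

Lemma prefix_bounded_cat os1 os2 B1 N1 B2 :
  prefix_bounded os1 B1 -> net_bounded os1 N1 -> prefix_bounded os2 B2 ->
  prefix_bounded (os1 ++ os2) (maxn B1 (N1 + B2)).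
Proof.
move=> P1 N1os1 P2 tau n; rewrite take_cat.
case: ifP => _; first exact: leq_trans (P1 tau n) (leq_maxl _ _).
rewrite foldl_cat; apply: leq_trans (ndiff_triangle _ (run tau os1) _) _.
have := P2 (run tau os1) (n - size os1); have := N1os1 tau; lia.
Qed.

Lemma prefix_bounded_single o B : net_bounded [:: o] B -> prefix_bounded [:: o] B.
Proof. by move=> No tau [|n]; rewrite ?ndiffxx //; apply: No. Qed.

Lemma prefix_bounded_SetZero v : prefix_bounded [:: SetZero v] 1.
Proof. by apply: prefix_bounded_single => tau; apply: ndiff_SetZero. Qed.

Lemma prefix_bounded_Exch a b : prefix_bounded [:: Exch m a b] 2.
Proof. by apply: prefix_bounded_single => tau; apply: ndiff_Exch. Qed.

Lemma Exch_conj (tau : state) a h b : a < h < b -> b <= L ->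
  apply_op (apply_op (apply_op tau (Exch m a h)) (Exch m h b)) (Exch m a h)
  = apply_op tau (Exch m a b).
Proof.
move=> /andP[ah hb] bL; apply: functional_extensionality => l /=.
have neq x y : x < y -> (x == y) = false /\ (y == x) = false.
  by move=> xy; split; apply/eqP; lia.
rewrite !inordK ?eqxx; try lia.
have [ah1 ah2] := neq a h ah; have [hb1 hb2] := neq h b hb.
have [ab1 ab2] := neq a b (ltn_trans ah hb).
rewrite ?ah1 ?ah2 ?hb1 ?hb2 ?ab1 ?ab2.
case: (eqVneq (l : nat) a) => // la; case: (eqVneq (l : nat) h) => // lh.
rewrite (_ : (l : nat) == b = false); last by apply/eqP; lia.
by rewrite -lh inord_val.
Qed.

Lemma run_swap_ops_fuel fuel (tau : state) a b :
  a <= b <= L -> b - a <= fuel ->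
  run tau (swap_ops_fuel m fuel a b) = apply_op tau (Exch m a b).
Proof.
elim: fuel tau a b => [|f IHf] tau a b /andP[ab bL] fuel_ab /=.
  by have -> : b - a <= 1 by lia.
case: ifP => // far.
by rewrite !foldl_cat !IHf ?Exch_conj //; lia.
Qed.

Lemma net_bounded_swap_halves f a b : a <= b <= L -> 1 < b - a <= f.+1 ->
  let h := (a + b) %/ 2 in
  net_bounded (swap_ops_fuel m f a h ++ swap_ops_fuel m f h b) 4.
Proof.
move=> /andP[ab bL] fuel_ab h tau; rewrite foldl_cat.
rewrite !run_swap_ops_fuel; try (rewrite /h; lia).
apply: leq_trans (ndiff_triangle _ (apply_op tau (Exch m a h)) _) _.
exact: (leq_add (ndiff_Exch _ _ _) (ndiff_Exch _ _ _)).
Qed.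

Lemma prefix_bounded_swap_ops_fuel fuel e a b :
  a <= b <= L -> b - a <= fuel -> b - a <= 2 ^ e ->
  prefix_bounded (swap_ops_fuel m fuel a b) (2 + 4 * e).
Proof.
elim: fuel e a b => [|f IHf] e a b /andP[ab bL] fuel_ab ab_e /=.
  have -> : b - a <= 1 by lia.
  by apply: prefix_bounded_le (prefix_bounded_Exch _ _); lia.
case: ifP => [_|far]; first by apply: prefix_bounded_le (prefix_bounded_Exch _ _); lia.
case: e ab_e => [|e]; rewrite ?expn0 ?expnS => ab_e; first lia.
set h := (a + b) %/ 2.
have P1 : prefix_bounded (swap_ops_fuel m f a h) (2 + 4 * e).
  by apply: IHf; rewrite /h; lia.
have P2 : prefix_bounded (swap_ops_fuel m f h b) (2 + 4 * e).
  by apply: IHf; rewrite /h; lia.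
have N1 : net_bounded (swap_ops_fuel m f a h) 2.
  by move=> tau; rewrite run_swap_ops_fuel; [exact: ndiff_Exch|rewrite /h; lia..].
have N12 := @net_bounded_swap_halves f a b.
rewrite catA; apply: prefix_bounded_le
  (prefix_bounded_cat (prefix_bounded_cat P1 N1 P2) (N12 _ _) P1); lia.
Qed.

Lemma prefix_bounded_gamma_ops kstar (lam : state) (i : 'I_L.+1) k e :
  L <= 2 ^ e -> prefix_bounded (gamma_ops kstar lam i k) (7 + 8 * e).
Proof.
move=> L_e; have iL : (i : nat) <= L by rewrite -ltnS.
have PS : prefix_bounded (swap_ops m 0 i) (2 + 4 * e).
  by apply: prefix_bounded_swap_ops_fuel; lia.
have NS := prefix_net_bounded PS.
have P0 v := prefix_bounded_SetZero v.
have N0 v := prefix_net_bounded (P0 v).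
apply: prefix_bounded_le (prefix_bounded_cat (P0 kstar) (N0 kstar)
  (prefix_bounded_cat PS NS (prefix_bounded_cat (P0 k) (N0 k)
  (prefix_bounded_cat PS NS (P0 (lam ord0)))))).
lia.
Qed.

Lemma ndiff_gamma_path kstar (lam : state) i k e tau : L <= 2 ^ e ->
  List.In tau (gamma_path kstar lam i k) ->
  ndiff tau lam <= 7 + 8 * e /\ ndiff tau (replace_at lam i k) <= 8 + 8 * e.
Proof.
move=> L_e tau_in; have [n ->] := in_scanl_take tau_in.
have Plam := prefix_bounded_gamma_ops kstar lam i k L_e lam n.
split=> //; apply: leq_trans (ndiff_triangle _ lam _) _.
by rewrite (_ : 8 + 8 * e = 7 + 8 * e + 1) ?leq_add ?ndiff_replace_at //; lia.
Qed.

End Displacement.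

Section LogBound.
Local Open Scope R_scope.

Lemma INR_expn (b t : nat) : INR (b ^ t)%N = INR b ^ t.
Proof. by elim: t => // t IHt; rewrite expnS mult_INR IHt. Qed.

Lemma ln_ge_mul_ln2 (L t : nat) : (2 ^ t <= L)%N -> INR t * ln 2 <= ln (INR L).
Proof.
move=> /leP /le_INR tL; rewrite -ln_pow; last lra.
have pos : 0 < INR (2 ^ t)%N by apply/lt_0_INR/ltP; rewrite expn_gt0.
have two : INR 2 = 2 by simpl; lra.
rewrite INR_expn two in tL pos; have [lt|<-] := Rle_lt_or_eq_dec _ _ tL; last lra.
exact/Rlt_le/ln_increasing.
Qed.

Lemma ln2_gt0 : 0 < ln 2.
Proof. by rewrite -ln_1; apply: ln_increasing; lra. Qed.

Lemma INR_le_log2 (L t x : nat) : (2 ^ t <= L)%N -> (x <= 24 * t)%N ->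
  INR x <= 24 / ln 2 * ln (INR L).
Proof.
move=> /ln_ge_mul_ln2 lnL /leP /le_INR x_t; have ln2 := ln2_gt0.
apply: Rle_trans x_t _; rewrite mult_INR.
apply: Rle_trans (_ : 24 / ln 2 * (INR t * ln 2) <= _).
  by right; simpl; field; lra.
by apply: Rmult_le_compat_l => //; apply/Rlt_le/Rdiv_lt_0_compat; lra.
Qed.

End LogBound.

Theorem lemma4 :
  exists C : R, Rlt 0 C /\
    forall (L m : nat), 2 <= L -> 1 <= m ->
    forall (kstar : 'I_m) (i : 'I_L.+1) (k : 'I_m) (lam : state L m),
    forall tau : state L m, List.In tau (gamma_path kstar lam i k) ->
      Rle (INR (ndiff tau lam)) (Rmult C (ln (INR L))) /\
      Rle (INR (ndiff tau (replace_at lam i k))) (Rmult C (ln (INR L))).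
Proof.
exists (Rdiv 24 (ln 2)); split; first by apply: Rdiv_lt_0_compat; [lra|exact: ln2_gt0].
move=> L m L2 _ kstar i k lam tau tau_in.
set t := trunc_log 2 L.
have t_gt0 : 0 < t by rewrite trunc_log_gt0; lia.
have L_t : L <= 2 ^ t.+1 by apply/ltnW/trunc_log_ltn.
have t_L : 2 ^ t <= L by apply: trunc_logP; lia.
have [on_lam on_lamik] := ndiff_gamma_path L_t tau_in.
by split; apply: (INR_le_log2 t_L); lia.
Qed.
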